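(* Let $A$ be an abelian group. The set $IE(A)$ of all inertial endomorphisms of $A$ is a subring of the endomorphism ring $E(A)$, and it contains the set $F(A)$ of all endomorphisms of $A$ with finite image, which is an ideal of $IE(A)$.
   Context: Abelian groups are written additively. An endomorphism $\varphi$ of an abelian group $A$ is called inertial if for every subgroup $X\le A$ the quotient $(\varphi(X)+X)/X$ is finite. *)

From mathcomp Require Import all_boot all_algebra.
Set Implicit Arguments. Unset Strict Implicit. Unset Printing Implicit Defensive.
Import GRing.Theory.
Local Open Scope ring_scope.

Section Inertial.
Variable A : zmodType.

Definition endo (f : A -> A) : Prop := forall x y, f (x - y) = f x - f y.

Definition subgroup (X : A -> Prop) : Prop :=
  X 0 /\ forall x y, X x -> X y -> X (x - y).

Definition img_plus (f : A -> A) (X : A -> Prop) : A -> Prop :=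
  fun z => exists x y, X x /\ X y /\ z = f x + y.

(* Y/X is finite (X <= Y): finitely many elements of Y represent all cosets of X in Y *)
Definition finite_quotient (Y X : A -> Prop) : Prop :=
  exists s : seq A, (forall y, y \in s -> Y y) /\
    forall z, Y z -> exists2 y, y \in s & X (z - y).

Definition inertial (f : A -> A) : Prop :=
  forall X, subgroup X -> finite_quotient (img_plus f X) X.

Definition IE (f : A -> A) : Prop := endo f /\ inertial f.

Definition finite_image (f : A -> A) : Prop := exists s : seq A, forall x, f x \in s.

Definition FE (f : A -> A) : Prop := endo f /\ finite_image f.

End Inertial.

(** A subgroup X has only finitely many cosets meeting phi(X) + X as soon as finitely
    many elements y_i, not necessarily in phi(X) + X, satisfy phi(X) + X <= U (y_i + X):
    classically, the y_i whose coset misses phi(X) + X can be dropped and the others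
    replaced by an element of that coset.  With this relaxation everything is a finite
    computation on representatives: for phi - psi subtract representatives pairwise;
    for phi psi note (phi psi)(X) + X <= phi(Y) + Y with the subgroup Y = psi(X) + X,
    and add representatives of phi(Y) + Y modulo Y to those of Y modulo X.  An
    endomorphism with finite image is inertial with its image as representatives. *)
From mathcomp Require Import all_boot all_algebra.
From Stdlib Require Import Classical.
Set Implicit Arguments. Unset Strict Implicit. Unset Printing Implicit Defensive.
Import GRing.Theory.
Local Open Scope ring_scope.

Section InertialEndomorphisms.
Variable A : zmodType.
Implicit Types (f g : A -> A) (X Y Z : A -> Prop) (s t : seq A).

Definition coset_cover Y X s := forall z, Y z -> exists2 y, y \in s & X (z - y).

Lemma subgroup0 X : subgroup X -> X 0.
Proof. by case. Qed.

Lemma subgroupB X x y : subgroup X -> X x -> X y -> X (x - y).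
Proof. by case=> _; apply. Qed.

Lemma subgroupD X x y : subgroup X -> X x -> X y -> X (x + y).
Proof.
move=> sX Xx Xy; rewrite -[y]opprK; apply: subgroupB => //.
by rewrite -sub0r; apply: subgroupB => //; apply: subgroup0.
Qed.

Lemma finite_quotient_cover Y X s :
  subgroup X -> coset_cover Y X s -> finite_quotient Y X.
Proof.
move=> sX; elim: s Y => [|a s IHs] Y coverY.
  by exists [::]; split=> // z /coverY [].
pose Ya z := Y z /\ ~ X (z - a).
have [t [tY coverYa]] : finite_quotient Ya X.
  apply: IHs => z [Yz nXza]; have [y] := coverY z Yz.
  by rewrite in_cons => /orP [/eqP ->|ys] Xzy; [|exists y].
have coverYa' z : Y z -> ~ X (z - a) -> exists2 y, y \in t & X (z - y).
  by move=> Yz nXza; apply: coverYa.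
have [[z0 [Yz0 Xz0a]]|noYa] := classic (exists z0, Y z0 /\ X (z0 - a)).
- exists (z0 :: t); split=> [y|z Yz].
    by rewrite in_cons => /orP [/eqP ->|/tY []].
  have [Xza|nXza] := classic (X (z - a)); last first.
    by have [y yt Xzy] := coverYa' z Yz nXza; exists y; rewrite // in_cons yt orbT.
  exists z0; first exact: mem_head.
  have -> : z - z0 = (z - a) - (z0 - a) by rewrite opprB addrA subrK.
  exact: subgroupB.
- exists t; split=> [y /tY [] //|z Yz].
  by apply: coverYa' => // Xza; apply: noYa; exists z.
Qed.

Lemma inertial_cover f :
  (forall X, subgroup X -> exists s, coset_cover (img_plus f X) X s) -> inertial f.
Proof. by move=> coverf X sX; have [s] := coverf X sX; apply: finite_quotient_cover. Qed.

Lemma coset_cover_sub Z Y X s :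
  (forall z, Z z -> Y z) -> coset_cover Y X s -> coset_cover Z X s.
Proof. by move=> ZY coverY z /ZY /coverY. Qed.

Lemma coset_cover_trans Z Y X s t : subgroup X ->
  coset_cover Z Y t -> coset_cover Y X s ->
  coset_cover Z X [seq a + b | a <- t, b <- s].
Proof.
move=> sX coverZ coverY z /coverZ [a ta /coverY [b sb Xb]].
by exists (a + b); [apply: allpairs_f | rewrite opprD addrA].
Qed.

Lemma inertial_cover_image f X : subgroup X -> inertial f ->
  exists s, forall x, X x -> exists2 y, y \in s & X (f x - y).
Proof.
move=> sX /(_ X sX) [s [_ coverf]]; exists s => x Xx.
by apply: coverf; exists x, 0; rewrite addr0; do !split=> //; apply: subgroup0.
Qed.

Lemma endo0 f : endo f -> f 0 = 0.
Proof. by move=> ef; have := ef 0 0; rewrite !subrr. Qed.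

Lemma subB4 (a b c d : A) : a - b - (c - d) = a - c - (b - d).
Proof. by rewrite !opprB addrACA [RHS]addrACA (addrC (- b)). Qed.

Lemma endo_cst0 : endo (fun _ : A => 0).
Proof. by move=> x y; rewrite subrr. Qed.

Lemma endo_id : endo (@id A).
Proof. by []. Qed.

Lemma endoB f g : endo f -> endo g -> endo (fun x => f x - g x).
Proof. by move=> ef eg x y; rewrite ef eg subB4. Qed.

Lemma endo_comp f g : endo f -> endo g -> endo (fun x => f (g x)).
Proof. by move=> ef eg x y; rewrite eg ef. Qed.

Lemma subgroup_img_plus f X : endo f -> subgroup X -> subgroup (img_plus f X).
Proof.
move=> ef sX; have X0 := subgroup0 sX; split.
  by exists 0, 0; rewrite (endo0 ef) addr0.
move=> _ _ [x1 [y1 [Xx1 [Xy1 ->]]]] [x2 [y2 [Xx2 [Xy2 ->]]]].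
exists (x1 - x2), (y1 - y2); do 2?split; try exact: subgroupB.
by rewrite ef opprD addrACA.
Qed.

Lemma inertial_cst0 : inertial (fun _ : A => 0).
Proof.
apply: inertial_cover => X sX; exists [:: 0] => _ [x [y [_ [Xy ->]]]].
by exists 0; rewrite ?mem_head // add0r subr0.
Qed.

Lemma inertial_id : inertial (@id A).
Proof.
apply: inertial_cover => X sX; exists [:: 0] => _ [x [y [Xx [Xy ->]]]].
by exists 0; rewrite ?mem_head // subr0; apply: subgroupD.
Qed.

Lemma inertialB f g : inertial f -> inertial g -> inertial (fun x => f x - g x).
Proof.
move=> If Ig; apply: inertial_cover => X sX.
have [s coverf] := inertial_cover_image sX If.
have [t coverg] := inertial_cover_image sX Ig.
exists [seq a - b | a <- s, b <- t] => _ [x [y [Xx [Xy ->]]]].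
have [a sa Xa] := coverf x Xx; have [b tb Xb] := coverg x Xx.
exists (a - b); first exact: allpairs_f.
rewrite addrAC -subB4; apply: subgroupD => //; exact: subgroupB.
Qed.

Lemma img_plus_comp_sub f g X : endo g -> subgroup X -> forall z,
  img_plus (fun x => f (g x)) X z -> img_plus f (img_plus g X) z.
Proof.
move=> eg sX _ [x [y [Xx [Xy ->]]]]; have X0 := subgroup0 sX.
exists (g x), y; split; first by exists x, 0; rewrite addr0.
by split=> //; exists 0, y; rewrite (endo0 eg) add0r.
Qed.

Lemma inertial_comp f g :
  endo g -> inertial f -> inertial g -> inertial (fun x => f (g x)).
Proof.
move=> eg If Ig; apply: inertial_cover => X sX.
have sY := subgroup_img_plus eg sX.
have [t [_ coverf]] := If _ sY; have [s [_ coverg]] := Ig X sX.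
exists [seq a + b | a <- t, b <- s].
apply: (coset_cover_sub (img_plus_comp_sub eg sX)).
exact: coset_cover_trans coverf coverg.
Qed.

Lemma inertial_finite_image f : finite_image f -> inertial f.
Proof.
move=> [s fs]; apply: inertial_cover => X sX; exists s => _ [x [y [_ [Xy ->]]]].
by exists (f x); rewrite // addrAC subrr add0r.
Qed.

Lemma finite_image_cst0 : finite_image (fun _ : A => 0).
Proof. by exists [:: 0] => x; rewrite mem_head. Qed.

Lemma finite_imageB f g :
  finite_image f -> finite_image g -> finite_image (fun x => f x - g x).
Proof.
by move=> [s fs] [t gt]; exists [seq a - b | a <- s, b <- t] => x; apply: allpairs_f.
Qed.

Lemma finite_image_compl f g : finite_image g -> finite_image (fun x => f (g x)).
Proof. by move=> [s gs]; exists (map f s) => x; apply: map_f. Qed.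

Lemma finite_image_compr f g : finite_image f -> finite_image (fun x => f (g x)).
Proof. by move=> [s fs]; exists s. Qed.

End InertialEndomorphisms.

Theorem mainTheorem1 (A : zmodType) :
  (* IE(A) is a subring of E(A) *)
  (IE (fun _ : A => 0) /\ IE (fun x : A => x) /\
   (forall f g : A -> A, IE f -> IE g -> IE (fun x => f x - g x)) /\
   (forall f g : A -> A, IE f -> IE g -> IE (fun x => f (g x)))) /\
  (* F(A) is contained in IE(A) *)
  (forall f : A -> A, FE f -> IE f) /\
  (* F(A) is an ideal of IE(A) *)
  (FE (fun _ : A => 0) /\
   (forall f g : A -> A, FE f -> FE g -> FE (fun x => f x - g x)) /\
   (forall f g : A -> A, IE f -> FE g ->
      FE (fun x => f (g x)) /\ FE (fun x => g (f x)))).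
Proof.
split; [split; [|split; [|split]]|split; [|split; [|split]]].
- by split; [apply: endo_cst0 | apply: inertial_cst0].
- by split; [apply: endo_id | apply: inertial_id].
- by move=> f g [ef If] [eg Ig]; split; [apply: endoB | apply: inertialB].
- by move=> f g [ef If] [eg Ig]; split; [apply: endo_comp | apply: inertial_comp].
- by move=> f [ef ff]; split; last apply: inertial_finite_image.
- by split; [apply: endo_cst0 | apply: finite_image_cst0].
- by move=> f g [ef ff] [eg fg]; split; [apply: endoB | apply: finite_imageB].
- move=> f g [ef _] [eg fg]; do 2!split.
  + exact: endo_comp.
  + exact: finite_image_compl.
  + exact: endo_comp.
  + exact: finite_image_compr.
Qed.
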